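(* For every $n\ge3$, the function $g_n(x_1,\ldots,x_n)=x_1x_2\vee x_1x_3\vee\cdots\vee x_1x_n\vee x_2x_3\cdots x_n$ is a positive threshold function depending on all its variables, it is not linear read-once, and its specification number in $\mathcal{H}_n$ is $\sigma_{\mathcal{H}_n}(g_n)=2n$.
   Context: $f$ on $\{0,1\}^n$ is positive if $f(\mathbf{x})=1$ and $\mathbf{x}\le\mathbf{y}$ coordinatewise imply $f(\mathbf{y})=1$. $f$ is a threshold function if there are $w_1,\ldots,w_n,t\in\mathbb{R}$ with $f(\mathbf{x})=0\iff\sum_i w_ix_i\le t$. $\mathcal{H}_n$ is the class of threshold functions of $n$ variables. A set $S\subseteq\{0,1\}^n$ specifies $f\in\mathcal{H}_n$ if $f$ is the only function in $\mathcal{H}_n$ agreeing with $f$ on $S$; $\sigma_{\mathcal{H}_n}(f)$ is the minimum size of such a set. Linear read-once (lro): constant or representable by a nested formula (literals are nested; $x\vee t$, $x\wedge t$, $\overline{x}\vee t$, $\overline{x}\wedge t$ are nested when $t$ is nested and contains neither $x$ nor $\overline{x}$). *)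

From Stdlib Require Import Reals.
From mathcomp Require Import all_boot.
Set Implicit Arguments. Unset Strict Implicit. Unset Printing Implicit Defensive.

(* Points of {0,1}^n : finite functions 'I_n -> bool; variable x_{k+1} is index k. *)
Definition point (n : nat) := {ffun 'I_n -> bool}.
Definition bfun (n : nat) := point n -> bool.

Definition b2R (b : bool) : R := if b then R1 else R0.

Definition positive_fun n (f : bfun n) : Prop :=
  forall x y : point n, f x = true -> (forall i, x i <= y i) -> f y = true.

Definition threshold n (f : bfun n) : Prop :=
  exists (w : 'I_n -> R) (t : R), forall x : point n,
    f x = false <-> Rle (\big[Rplus/R0]_(i < n) Rmult (w i) (b2R (x i))) t.

Definition flip n (x : point n) (i : 'I_n) : point n :=
  [ffun j => if j == i then ~~ x j else x j].

Definition depends_on_all n (f : bfun n) : Prop :=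
  forall i : 'I_n, exists x : point n, f x <> f (flip x i).

(* Nested formulas: literal (i, b) is x_i if b, negated x_i otherwise. *)
Inductive nform (n : nat) : Type :=
  | NLit : 'I_n -> bool -> nform n
  | NOr  : 'I_n -> bool -> nform n -> nform n
  | NAnd : 'I_n -> bool -> nform n -> nform n.

Fixpoint nvars n (t : nform n) : seq 'I_n :=
  match t with
  | NLit i _ => [:: i]
  | NOr i _ t' => i :: nvars t'
  | NAnd i _ t' => i :: nvars t'
  end.

Fixpoint nested n (t : nform n) : Prop :=
  match t with
  | NLit _ _ => True
  | NOr i _ t' => i \notin nvars t' /\ nested t'
  | NAnd i _ t' => i \notin nvars t' /\ nested t'
  end.

Definition lit n (i : 'I_n) (b : bool) (x : point n) : bool :=
  if b then x i else ~~ x i.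

Fixpoint neval n (t : nform n) (x : point n) : bool :=
  match t with
  | NLit i b => lit i b x
  | NOr i b t' => lit i b x || neval t' x
  | NAnd i b t' => lit i b x && neval t' x
  end.

Definition lro n (f : bfun n) : Prop :=
  (exists c : bool, forall x, f x = c) \/
  (exists t : nform n, nested t /\ forall x, f x = neval t x).

Definition specifies n (S : {set point n}) (f : bfun n) : Prop :=
  threshold f /\
  forall h : bfun n, threshold h -> (forall x, x \in S -> h x = f x) ->
    forall x, h x = f x.

Definition spec_number_eq n (f : bfun n) (k : nat) : Prop :=
  (exists S : {set point n}, specifies S f /\ #|S| = k) /\
  (forall S : {set point n}, specifies S f -> k <= #|S|).

(* g_n = x1x2 ∨ x1x3 ∨ ... ∨ x1xn ∨ x2x3...xn  (x1 is index 0) *)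
Definition g n : bfun n := fun x =>
  [exists i : 'I_n, exists j : 'I_n,
     [&& val i == 0, val j != 0, x i & x j]]
  || [forall j : 'I_n, (val j != 0) ==> x j].

From HB Require Import structures.
From Stdlib Require Import Reals Lra.
From mathcomp Require Import all_boot zify.
Set Implicit Arguments. Unset Strict Implicit. Unset Printing Implicit Defensive.

(* The minimal true points of g_n are x1 x_i (i >= 2) and x2 ... xn; the maximal false
   points are their complements.  A threshold function that is true on the former and
   false on the latter has nonnegative weights (compare points differing in a single
   coordinate), hence is positive, hence equals g_n: these 2n points specify g_n.
   Conversely, toggling g_n at any one of them yields again a threshold function, so
   each of them lies in every specifying set.  All these threshold functions depend only
   on x1, one other variable x_j and the number of remaining variables set to 1, which
   gives explicit integer weights.  Finally, every literal is false at some minimal true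
   point and true at the complementary maximal false point, which rules out every
   possible outermost connective of a nested formula. *)

Lemma RplusA : associative Rplus. Proof. by move=> a b c; rewrite Rplus_assoc. Qed.
HB.instance Definition _ := Monoid.isComLaw.Build R R0 Rplus RplusA Rplus_comm Rplus_0_l.

Lemma leq_bool (a b : bool) : (a <= b) = (a ==> b).
Proof. by case: a; case: b. Qed.

Definition wsum n (w : 'I_n -> R) (x : point n) : R :=
  \big[Rplus/R0]_(i < n) Rmult (w i) (b2R (x i)).

Lemma flipK n (x : point n) (i : 'I_n) : flip (flip x i) i = x.
Proof. by apply/ffunP => j; rewrite !ffunE; case: eqP => // ->; rewrite negbK. Qed.

Lemma wsum_flip n (w : 'I_n -> R) (x : point n) (j : 'I_n) :
  ~~ x j -> wsum w (flip x j) = Rplus (wsum w x) (w j).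
Proof.
move=> /negbTE xj; rewrite /wsum (bigD1 j) // [in RHS](bigD1 j) // ffunE eqxx xj.
rewrite (eq_bigr (fun i => Rmult (w i) (b2R (x i)))); last first.
  by move=> i /negbTE ij; rewrite ffunE ij.
rewrite /b2R /=; lra.
Qed.

Lemma wsum_le n (w : 'I_n -> R) (x y : point n) :
  (forall i, x i ==> y i) -> (forall i, ~~ x i -> y i -> Rle 0 (w i)) ->
  Rle (wsum w x) (wsum w y).
Proof.
move=> xy w_ge0; apply: (big_ind2 Rle) => [|a b c d|i _]; first exact: Rle_refl.
  exact: Rplus_le_compat.
move: (xy i) (w_ge0 i); case: (x i); case: (y i) => // _ w_i; rewrite /b2R.
- exact: Rle_refl.
- by have := w_i isT isT; lra.
- exact: Rle_refl.
Qed.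

Lemma positive_of_threshold_weights n (f : bfun n) (w : 'I_n -> R) (t : R) :
  (forall x, f x = false <-> Rle (wsum w x) t) -> (forall i, Rle 0 (w i)) ->
  positive_fun f.
Proof.
move=> fE w_ge0 x y fx le_xy; case fy: (f y) => //.
suff : f x = false by rewrite fx.
apply/fE/(Rle_trans _ _ _ _ (proj1 (fE y) fy))/wsum_le => // i.
by rewrite -leq_bool.
Qed.

Definition min_true n (i : 'I_n.+1) : point n.+1 :=
  [ffun k => if i == ord0 then k != ord0 else (k == ord0) || (k == i)].

Definition max_false n (i : 'I_n.+1) : point n.+1 := [ffun k => ~~ min_true i k].

Definition others n (j k : 'I_n.+1) := (k != ord0) && (k != j).

Lemma exists_others n (i : 'I_n.+3) : exists k, others i k.
Proof.
pose j1 : 'I_n.+3 := Ordinal (isT : 1 < n.+3).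
pose j2 : 'I_n.+3 := Ordinal (isT : 2 < n.+3).
case: (eqVneq i j1) => [->|ij1]; first by exists j2.
by exists j1; rewrite /others [j1 == i]eq_sym ij1.
Qed.

Lemma gE n (y : point n.+1) :
  g y = y ord0 && [exists k, (k != ord0) && y k] || [forall k, (k != ord0) ==> y k].
Proof.
rewrite /g; congr orb; apply/existsP/andP.
  case=> i /existsP [k /and4P [i0 k0 yi yk]].
  have /eqP ei : i == ord0 := i0; subst i.
  by split=> //; apply/existsP; exists k; rewrite k0.
by case=> y0 /existsP [k /andP [k0 yk]]; exists ord0; apply/existsP; exists k; rewrite y0 yk k0.
Qed.

Lemma g_minimal n (y : point n.+1) :
  g y <-> exists i, forall k, min_true i k ==> y k.
Proof.
rewrite gE; split.
  case/orP => [/andP [y0 /existsP [i /andP [i0 yi]]] | /forallP yT].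
    by exists i => k; rewrite ffunE (negbTE i0); apply/implyP => /orP [] /eqP ->.
  by exists ord0 => k; rewrite ffunE eqxx; apply: yT.
case=> i le_iy; case: (eqVneq i ord0) => [i0|i0].
  by apply/orP; right; apply/forallP => k; have := le_iy k; rewrite ffunE i0 eqxx.
have := le_iy ord0; have := le_iy i; rewrite !ffunE (negbTE i0) !eqxx orbT /= => yi y0.
by rewrite y0; apply/orP; left; apply/existsP; exists i; rewrite i0.
Qed.

Lemma g_maximal n (y : point n.+1) :
  g y = false -> exists i, forall k, y k ==> max_false i k.
Proof.
rewrite gE => /norP [/nandP y_ex /forallPn [j]]; rewrite negb_imply => /andP [j0 yj].
case: y_ex => [y0 | /existsPn y_off].
  exists j => k; rewrite !ffunE (negbTE j0) negb_or.
  by apply/implyP => yk; apply/andP; split; apply: contraTneq yk => ->.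
exists ord0 => k; rewrite !ffunE eqxx negbK; apply/implyP => yk.
by apply: contraT => k0; have := y_off k; rewrite k0 yk.
Qed.

Lemma g_positive n : positive_fun (@g n.+1).
Proof.
move=> x y /g_minimal [i le_ix] le_xy; apply/g_minimal; exists i => k.
by have := le_ix k; have := le_xy k; rewrite leq_bool; case: (min_true i k); case: (x k).
Qed.

Lemma g_min_true n (i : 'I_n.+1) : g (min_true i).
Proof. by apply/g_minimal; exists i => k; rewrite implybb. Qed.

Lemma g_max_false n (i : 'I_n.+2) : g (max_false i) = false.
Proof.
apply/negbTE/negP => /g_minimal [j le_j].
case: (eqVneq i ord0) => [i0|i0]; case: (eqVneq j ord0) => [j0|j0].
- by have := le_j (Ordinal (isT : 1 < n.+2)); rewrite !ffunE i0 j0 eqxx.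
- by have := le_j j; rewrite !ffunE i0 (negbTE j0) !eqxx orbT.
- by have := le_j i; rewrite !ffunE j0 (negbTE i0) !eqxx orbT.
- by have := le_j ord0; rewrite !ffunE (negbTE i0) (negbTE j0) eqxx.
Qed.

Lemma eq_g_of_positive n (f : bfun n.+1) : positive_fun f ->
  (forall i, f (min_true i)) -> (forall i, f (max_false i) = false) ->
  forall y, f y = g y.
Proof.
move=> f_pos fT fF y; case gy: (g y).
  have [i le_iy] := proj1 (g_minimal y) gy.
  by apply: f_pos (fT i) _ => k; rewrite leq_bool.
have [i le_yi] := g_maximal gy; apply: contraFF (fF i) => fy.
by apply: f_pos fy _ => k; rewrite leq_bool.
Qed.

Lemma flip_min_true_le_max_false n (j k : 'I_n.+1) : j != ord0 -> others j k ->
  forall l, flip (min_true j) ord0 l ==> max_false k l.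
Proof.
move=> j0 /andP [k0 kj] l; rewrite !ffunE (negbTE j0) (negbTE k0).
case: (eqVneq l ord0) => [->|_] //=; apply/implyP => /eqP ->.
by rewrite eq_sym.
Qed.

Lemma threshold_weights_ge0 n (f : bfun n.+3) (w : 'I_n.+3 -> R) (t : R) :
  (forall x, f x = false <-> Rle (wsum w x) t) ->
  (forall i, f (min_true i)) -> (forall i, f (max_false i) = false) ->
  forall i, Rle 0 (w i).
Proof.
move=> fE fT fF.
have gt_t x : f x -> Rlt t (wsum w x).
  by move=> fx; apply: Rnot_le_lt => /fE; rewrite fx.
have le_t x : f x = false -> Rle (wsum w x) t := proj1 (fE x).
(* min_true ord0 is max_false j with x_j switched on *)
have w_gt0 j : j != ord0 -> Rlt 0 (w j).
  move=> j0; have fj : ~~ max_false j j by rewrite !ffunE (negbTE j0) eqxx orbT.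
  have flipE : flip (max_false j) j = min_true ord0.
    apply/ffunP => k; rewrite !ffunE (negbTE j0) negbK.
    by case: (eqVneq k j) => [->|_]; rewrite ?eqxx ?orbT ?orbF.
  have := gt_t _ (fT ord0); have := le_t _ (fF j).
  rewrite -flipE (wsum_flip w fj); lra.
move=> i; case: (eqVneq i ord0) => [->|i0]; last exact/Rlt_le/w_gt0.
have [j /andP [j0 _]] := exists_others (ord0 : 'I_n.+3).
(* min_true j is {j} with x1 switched on, and {j} lies below max_false k *)
have [k jk] := exists_others j; have /andP [k0 _] := jk.
have y0 : ~~ flip (min_true j) ord0 ord0 by rewrite !ffunE eqxx (negbTE j0).
have le_wy : Rle (wsum w (flip (min_true j) ord0)) (wsum w (max_false k)).
  apply: wsum_le (flip_min_true_le_max_false j0 jk) _ => l _ kl; apply/Rlt_le/w_gt0.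
  by apply: contraTneq kl => ->; rewrite !ffunE (negbTE k0) eqxx.
have := gt_t _ (fT j); have := le_t _ (fF k).
rewrite -[min_true j](flipK _ ord0) (wsum_flip w y0); lra.
Qed.

Definition num_others n (j : 'I_n.+1) := #|[pred k | others j k]|.

Definition count_others n (j : 'I_n.+1) (y : point n.+1) :=
  #|[pred k | others j k && y k]|.

Lemma count_othersE n (j : 'I_n.+1) (y : point n.+1) :
  count_others j y = \sum_(k | others j k) (y k : nat).
Proof.
rewrite /count_others -sum1_card big_mkcondr /=.
by apply: eq_bigr => k _; case: (y k).
Qed.

Lemma count_others_le n (j : 'I_n.+1) (y : point n.+1) : count_others j y <= num_others j.
Proof. by apply/subset_leq_card/subsetP => k /andP []. Qed.

Lemma count_others_eq0 n (j : 'I_n.+1) (y : point n.+1) :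
  (count_others j y == 0) = [forall k, others j k ==> ~~ y k].
Proof.
apply/eqP/forallP => [/card0_eq y_off k | y_off].
  by have := y_off k; rewrite !inE; case: (others j k); case: (y k).
by apply: eq_card0 => k; have := y_off k; rewrite !inE; case: (others j k); case: (y k).
Qed.

Lemma count_others_full n (j : 'I_n.+1) (y : point n.+1) :
  (count_others j y == num_others j) = [forall k, others j k ==> y k].
Proof.
have sub : [pred k | others j k && y k] \subset [pred k | others j k].
  by apply/subsetP => k /andP [].
rewrite /count_others /num_others (eq_leqif (subset_leqif_card sub)).
apply/subsetP/forallP => [y_on k | y_on k ok].
  by apply/implyP => ok; have /andP [] := y_on k ok.
by rewrite inE in ok; rewrite inE ok (implyP (y_on k) ok).
Qed.

Lemma num_others_gt0 n (j : 'I_n.+3) : 0 < num_others j.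
Proof. by have [k ok] := exists_others j; apply/card_gt0P; exists k. Qed.

Definition profile_weight n (j : 'I_n.+1) (a b c : nat) (k : 'I_n.+1) : nat :=
  if k == ord0 then a else if k == j then b else c.

Lemma sum_profile_weight n (j : 'I_n.+1) (a b c : nat) (y : point n.+1) : j != ord0 ->
  \sum_k profile_weight j a b c k * y k = a * y ord0 + b * y j + c * count_others j y.
Proof.
move=> j0; rewrite (bigD1 ord0) // (bigD1 j) //= -addnA count_othersE big_distrr.
rewrite /profile_weight eqxx (negbTE j0) eqxx.
by do 2 congr (_ + _); apply: eq_bigr => k /andP [/negbTE -> /negbTE ->].
Qed.

Lemma wsum_INR n (w : 'I_n -> nat) (x : point n) :
  wsum (fun i => INR (w i)) x = INR (\sum_i w i * x i).
Proof.
rewrite (big_morph INR (id1 := R0) (op1 := Rplus)); last by []; last exact: plus_INR.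
by rewrite /wsum; apply: eq_bigr => i _; rewrite mult_INR; case: (x i).
Qed.

Lemma threshold_of_profile n (f : bfun n.+1) (j : 'I_n.+1) (P : bool -> bool -> nat -> bool)
    (a b c t : nat) :
  j != ord0 -> (forall y, f y = P (y ord0) (y j) (count_others j y)) ->
  (forall bz bj k, k <= num_others j -> P bz bj k = (t < a * bz + b * bj + c * k)) ->
  threshold f.
Proof.
move=> j0 fP Plin; exists (fun k => INR (profile_weight j a b c k)), (INR t) => y.
rewrite -[X in Rle X _]/(wsum (fun k => INR (profile_weight j a b c k)) y).
rewrite wsum_INR sum_profile_weight // fP Plin ?count_others_le //; split.
  by move/negbT; rewrite -leqNgt => /leP /le_INR.
by move/INR_le/leP; rewrite leqNgt => /negbTE.
Qed.

(* [gprofile N (y x1) (y xj) k] is g y when k of the N variables other than x1, xj are set *)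
Definition gprofile (N : nat) (bz bj : bool) (k : nat) : bool :=
  bz && (bj || (0 < k)) || bj && (k == N).

Lemma g_profile n (j : 'I_n.+1) (y : point n.+1) : j != ord0 ->
  g y = gprofile (num_others j) (y ord0) (y j) (count_others j y).
Proof.
move=> j0; rewrite gE /gprofile lt0n count_others_eq0 count_others_full.
have others_split k : (k != ord0) = (k == j) || others j k.
  by rewrite /others; case: (eqVneq k j) => [->|]; rewrite ?j0 ?andbT.
have -> : [exists k, (k != ord0) && y k] = y j || ~~ [forall k, others j k ==> ~~ y k].
  apply/existsP/orP => [[k /andP [k0 yk]] | [yj | /forallPn [k]]].
  - move: k0; rewrite others_split => /orP [/eqP <- | ok]; first by left.
    by right; apply/forallPn; exists k; rewrite ok yk.
  - by exists j; rewrite j0.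
  - by rewrite negb_imply negbK => /andP [/andP [k0 _] yk]; exists k; rewrite k0.
congr (_ || _); apply/forallP/andP => [y_on | [yj /forallP y_on] k].
  split; first by have := y_on j; rewrite j0.
  by apply/forallP => k; apply/implyP => /andP [k0 _]; apply: (implyP (y_on k)).
rewrite others_split; apply/implyP => /orP [/eqP -> // | ok]; exact: (implyP (y_on k)).
Qed.

Lemma eq_point_profile n (j : 'I_n.+1) (b : bool) (p y : point n.+1) :
  (forall k, others j k -> p k = b) ->
  (y == p) = [&& y ord0 == p ord0, y j == p j &
                 count_others j y == (if b then num_others j else 0)].
Proof.
move=> p_others; have -> : (count_others j y == (if b then num_others j else 0)) =
    [forall k, others j k ==> (y k == b)].
  case: b p_others => _; rewrite ?count_others_full ?count_others_eq0;
  by apply: eq_forallb => k; case: (y k); rewrite ?implybT ?implybF.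
apply/eqP/and3P => [-> | [/eqP y0 /eqP yj /forallP y_others]].
  by split=> //; apply/forallP => k; apply/implyP => /p_others ->.
apply/ffunP => k; case: (eqVneq k ord0) => [-> //|k0]; case: (eqVneq k j) => [-> //|kj].
have ok : others j k by rewrite /others k0 kj.
by rewrite (p_others k ok); apply/eqP; apply: (implyP (y_others k)).
Qed.

Definition toggle n (f : bfun n) (p : point n) : bfun n := fun y => f y (+) (y == p).

Lemma threshold_toggle_g n (j : 'I_n.+1) (b : bool) (p : point n.+1) (a c t : nat) :
  j != ord0 -> (forall k, others j k -> p k = b) ->
  (forall bz bj k, k <= num_others j ->
     gprofile (num_others j) bz bj k
       (+) [&& bz == p ord0, bj == p j & k == (if b then num_others j else 0)]
     = (t < a * bz + 1 * bj + c * k)) ->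
  threshold (toggle (@g n.+1) p).
Proof.
move=> j0 p_others; apply: threshold_of_profile (j0) _ => y.
by rewrite /toggle (g_profile _ j0) (eq_point_profile _ p_others).
Qed.

Ltac profile_arith :=
  move=> [] [] k le_kN; rewrite /gprofile /=; apply/idP/idP; lia.

Lemma threshold_g n : threshold (@g n.+3).
Proof.
have [j /andP [j0 _]] := exists_others (ord0 : 'I_n.+3).
have N_gt0 := num_others_gt0 j.
apply: (threshold_of_profile (a := num_others j) (b := 1) (c := 1) (t := num_others j) j0).
  by move=> y; apply: g_profile.
profile_arith.
Qed.

Lemma threshold_toggle_min_true n (i : 'I_n.+3) : threshold (toggle (@g n.+3) (min_true i)).
Proof.
case: (eqVneq i ord0) => [-> | i0].
  have [j /andP [j0 _]] := exists_others (ord0 : 'I_n.+3).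
  have N_gt0 := num_others_gt0 j.
  apply: (threshold_toggle_g (b := true) (a := (num_others j).+1) (c := 1) (t := (num_others j).+1) j0).
    by move=> k /andP [k0 _]; rewrite ffunE eqxx k0.
  rewrite !ffunE eqxx (negbTE j0); profile_arith.
have N_gt0 := num_others_gt0 i.
apply: (threshold_toggle_g (b := false) (a := (num_others i).*2.-1) (c := 2) (t := (num_others i).*2) i0).
  by move=> k /andP [k0 ki]; rewrite ffunE (negbTE i0) (negbTE k0) (negbTE ki).
rewrite !ffunE (negbTE i0) !eqxx orbT; profile_arith.
Qed.

Lemma threshold_toggle_max_false n (i : 'I_n.+3) : threshold (toggle (@g n.+3) (max_false i)).
Proof.
case: (eqVneq i ord0) => [-> | i0].
  have [j /andP [j0 _]] := exists_others (ord0 : 'I_n.+3).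
  have N_gt0 := num_others_gt0 j.
  apply: (threshold_toggle_g (b := false) (a := (num_others j).+1) (c := 1) (t := num_others j) j0).
    by move=> k /andP [k0 _]; rewrite !ffunE eqxx k0.
  rewrite !ffunE eqxx (negbTE j0); profile_arith.
have N_gt0 := num_others_gt0 i.
apply: (threshold_toggle_g (b := true) (a := (num_others i).*2.-1) (c := 2) (t := (num_others i).*2.-1) i0).
  by move=> k /andP [k0 ki]; rewrite !ffunE (negbTE i0) (negbTE k0) (negbTE ki).
rewrite !ffunE (negbTE i0) !eqxx orbT; profile_arith.
Qed.

Lemma mem_specifying_set n (S : {set point n}) (f : bfun n) (p : point n) :
  specifies S f -> threshold (toggle f p) -> p \in S.
Proof.
move=> [_ S_spec] thr; apply: contraT => pS.
have agree x : x \in S -> toggle f p x = f x.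
  by move=> xS; rewrite /toggle; case: eqP => [e|_]; [move: pS; rewrite -e xS | rewrite addbF].
by have := S_spec _ thr agree p; rewrite /toggle eqxx; case: (f p).
Qed.

Definition extremal n : {set point n.+1} := (@min_true n @: setT) :|: (@max_false n @: setT).

Lemma min_true_inj n : injective (@min_true n).
Proof.
move=> i j e; have := congr1 (fun x : point n.+1 => x ord0) e; rewrite !ffunE eqxx.
case: (eqVneq i ord0) => [->|i0]; case: (eqVneq j ord0) => [->|j0] //= _.
have := congr1 (fun x : point n.+1 => x i) e; rewrite !ffunE (negbTE i0) (negbTE j0) eqxx /=.
by move/esym/eqP.
Qed.

Lemma max_false_inj n : injective (@max_false n).
Proof.
move=> i j e; apply: min_true_inj; apply/ffunP => k.
by have := congr1 (fun x : point n.+1 => x k) e; rewrite !ffunE => /negb_inj.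
Qed.

Lemma card_extremal n : #|extremal n.+2| = 2 * n.+3.
Proof.
have disj : [disjoint @min_true n.+2 @: setT & @max_false n.+2 @: setT].
  apply/pred0P => p /=; apply/negbTE/andP => [[/imsetP [i _ ->] /imsetP [k _ e]]].
  by have := g_min_true i; rewrite e g_max_false.
rewrite /extremal (eqTleqif (leq_card_setU _ _) disj).
by rewrite !card_imset ?cardsT ?card_ord ?mul2n ?addnn //; [exact: max_false_inj | exact: min_true_inj].
Qed.

Lemma extremal_specifies n : specifies (extremal n.+2) (@g n.+3).
Proof.
split=> [|h [w [t hE]] agree]; first exact: threshold_g.
have hT i : h (min_true i) by rewrite agree ?g_min_true // in_setU imset_f.
have hF i : h (max_false i) = false by rewrite agree ?g_max_false // in_setU imset_f ?orbT.
have h_pos := positive_of_threshold_weights hE (threshold_weights_ge0 hE hT hF).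
exact: eq_g_of_positive h_pos hT hF.
Qed.

Lemma extremal_subset_specifying n (S : {set point n.+3}) :
  specifies S (@g n.+3) -> extremal n.+2 \subset S.
Proof.
move=> S_spec; apply/subsetP => p; rewrite in_setU => /orP [] /imsetP [i _ ->].
  exact: mem_specifying_set S_spec (threshold_toggle_min_true i).
exact: mem_specifying_set S_spec (threshold_toggle_max_false i).
Qed.

Lemma spec_number_g n : spec_number_eq (@g n.+3) (2 * n.+3).
Proof.
split; first by exists (extremal n.+2); rewrite card_extremal; split=> //; exact: extremal_specifies.
by move=> S /extremal_subset_specifying /subset_leq_card; rewrite card_extremal.
Qed.

Lemma g_depends_on_all n : depends_on_all (@g n.+3).
Proof.
move=> i; case: (eqVneq i ord0) => [-> | i0].
  have [j /andP [j0 _]] := exists_others (ord0 : 'I_n.+3).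
  have [k jk] := exists_others j.
  exists (min_true j); rewrite g_min_true => /esym g_flip.
  have le_flip l : flip (min_true j) ord0 l <= max_false k l.
    by rewrite leq_bool; apply: flip_min_true_le_max_false.
  by have := g_positive g_flip le_flip; rewrite g_max_false.
exists (min_true i); suff -> : flip (min_true i) i = max_false ord0.
  by rewrite g_min_true g_max_false => /eqP.
apply/ffunP => k; rewrite !ffunE (negbTE i0) eqxx negbK.
by case: (eqVneq k i) => [->|_]; rewrite ?(negbTE i0) ?eqxx ?orbT ?orbF.
Qed.

Lemma not_lro_of_literals n (f : bfun n.+1) :
  (forall i b, exists x, lit i b x && ~~ f x) ->
  (forall i b, exists x, ~~ lit i b x && f x) -> ~ lro f.
Proof.
move=> lit_off lit_on [[c fc] | [[i b | i b t | i b t] [_ fE]]].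
- have [x /andP [_ fx]] := lit_off ord0 true; have [y /andP [_ fy]] := lit_on ord0 true.
  by move: fx fy; rewrite !fc => /negPf ->.
- by have [x /andP [lx fx]] := lit_on i b; move: fx; rewrite fE /= (negbTE lx).
- by have [x /andP [lx fx]] := lit_off i b; move: fx; rewrite fE /= lx.
- by have [x /andP [lx fx]] := lit_on i b; move: fx; rewrite fE /= (negbTE lx).
Qed.

Lemma lit_min_true_off n (i : 'I_n.+3) (b : bool) : exists k, ~~ lit i b (min_true k).
Proof.
rewrite /lit; case: b; case: (eqVneq i ord0) => [-> | i0].
- by exists ord0; rewrite ffunE eqxx.
- have [k /andP [k0 ki]] := exists_others i.
  by exists k; rewrite ffunE (negbTE k0) (negbTE i0) [i == k]eq_sym (negbTE ki).
- have [j /andP [j0 _]] := exists_others (ord0 : 'I_n.+3).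
  by exists j; rewrite ffunE (negbTE j0) eqxx.
- by exists i; rewrite ffunE (negbTE i0) eqxx orbT.
Qed.

Lemma g_not_lro n : ~ lro (@g n.+3).
Proof.
apply: not_lro_of_literals => i b; have [k off] := lit_min_true_off i b.
  by exists (max_false k); rewrite g_max_false andbT; move: off; rewrite /lit !ffunE; case: b.
by exists (min_true k); rewrite off g_min_true.
Qed.

Theorem mainTheorem16 (n : nat) (hn : 3 <= n) :
  positive_fun (@g n) /\ threshold (@g n) /\ depends_on_all (@g n) /\
  ~ lro (@g n) /\ spec_number_eq (@g n) (2 * n).
Proof.
case: n hn => [|[|[|n]]] // _.
split; first exact: g_positive.
split; first exact: threshold_g.
split; first exact: g_depends_on_all.
split; first exact: g_not_lro.
exact: spec_number_g.
Qed.
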